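(* Every $3$-uniform bi-hypergraph with exactly $7$ vertices and at most $9$ edges is colorable. Consequently $\ell(7,3)\ge 10$.
   Context: A bi-hypergraph $\mathcal H=(V,E)$ consists of a finite vertex set $V$ and a set $E$ of subsets of $V$, called edges, with no edge contained in another. It is $r$-uniform if every edge has exactly $r$ elements. A mapping $f:V\to\mathbb N$ is a proper coloring of $\mathcal H$ if $1<|f(e)|<|e|$ for every $e\in E$, where $f(e)=\{f(v):v\in e\}$. $\mathcal H$ is colorable if it has a proper coloring, and uncolorable otherwise. A subhypergraph of $\mathcal H$ is a bi-hypergraph $(V',E')$ with $V'\subseteq V$, $E'\subseteq E$. $\mathcal H$ is minimal uncolorable if it is uncolorable but every proper subhypergraph of it is colorable. $\ell(n,r)$ is the minimum number of edges of a minimal uncolorable $r$-uniform bi-hypergraph with exactly $n$ vertices ($\infty$ if none exists). *)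

From mathcomp Require Import all_boot.
Set Implicit Arguments. Unset Strict Implicit. Unset Printing Implicit Defensive.

Definition bihypergraph (T : finType) (V : {set T}) (E : {set {set T}}) : Prop :=
  (forall e, e \in E -> e \subset V) /\
  (forall e1 e2, e1 \in E -> e2 \in E -> e1 \subset e2 -> e1 = e2).

Definition uniform (T : finType) (r : nat) (E : {set {set T}}) : Prop :=
  forall e, e \in E -> #|e| = r.

Definition ncolors (T : finType) (f : T -> nat) (e : {set T}) : nat :=
  size (undup (map f (enum e))).

(* f : V -> N is proper if 1 < |f(e)| < |e| for every edge e
   (f is given on the ambient type; only its values on V matter) *)
Definition proper_coloring (T : finType) (E : {set {set T}}) (f : T -> nat) : Prop :=
  forall e, e \in E -> 1 < ncolors f e < #|e|.

Definition colorable (T : finType) (E : {set {set T}}) : Prop :=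
  exists f : T -> nat, proper_coloring E f.

Definition subhypergraph (T : finType) (V' : {set T}) (E' : {set {set T}})
    (V : {set T}) (E : {set {set T}}) : Prop :=
  bihypergraph V' E' /\ V' \subset V /\ E' \subset E.

Definition minimal_uncolorable (T : finType) (V : {set T}) (E : {set {set T}}) : Prop :=
  bihypergraph V E /\ ~ colorable E /\
  (forall V' E', subhypergraph V' E' V E -> (V', E') <> (V, E) -> colorable E').

From mathcomp Require Import all_boot.
Set Implicit Arguments. Unset Strict Implicit. Unset Printing Implicit Defensive.

(* A 3-element edge is properly coloured exactly when it receives two colours,
   so it suffices to find one colouring of the 7 vertices that "splits" each
   edge.  Numbering the vertices 0..6, an edge becomes one of the 35 increasing
   triples, and a colouring may be taken among the 877 restricted-growth words
   (one per set partition of 7 points).  For each such word p we record the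
   set of triples p fails to split; the claim is then a hitting statement:
   every set of at most 9 triples avoids the failure set of some word. *)

Section HittingSearch.

Variable I : eqType.

Definition avoids (B X : seq I) : bool := all (fun t => t \notin B) X.

Definition solvable (Bs : seq (seq I)) (X : seq I) : bool := has (avoids^~ X) Bs.

(* If the first obstacle B of Bs meets X, it meets it at some t of B; [branch]
   tries every such t in turn, keeping only obstacles missing t.  Indices
   already tried are recorded in [tried]: a later branch may assume X avoids
   them, since such X were covered by an earlier sibling branch. *)
Fixpoint branch (sub : seq (seq I) -> seq I -> bool) (Bs : seq (seq I))
    (ts tried : seq I) : bool :=
  if ts is t :: ts' then
    sub [seq B <- Bs | t \notin B] tried && branch sub Bs ts' (t :: tried)
  else true.

(* [search n Bs tried]: depth-n search; an empty family certifies nothing,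
   and depth 0 only has to handle the empty list X. *)
Fixpoint search (n : nat) (Bs : seq (seq I)) (tried : seq I) : bool :=
  if Bs is B :: _ then
    if n is n'.+1 then branch (search n') Bs [seq t <- B | t \notin tried] tried
    else true
  else false.

Definition sound_upto (n : nat) (sub : seq (seq I) -> seq I -> bool) : Prop :=
  forall Bs tried X, sub Bs tried -> size X <= n -> avoids tried X -> solvable Bs X.

Lemma branch_sound n sub Bs ts tried X :
  sound_upto n sub -> branch sub Bs ts tried ->
  size X <= n.+1 -> avoids tried X -> has (mem ts) X -> solvable Bs X.
Proof.
move=> sub_sound; elim: ts tried => [|t ts IHts] tried /=; first by move=> _ _ _ /hasP[].
case/andP=> sub_t branch_ts sizeX avoidX hitX.
have [tX | tNX] := boolP (t \in X).
  (* X = t :: X': solve X' among the obstacles missing t *)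
  have permX := perm_to_rem tX.
  have sizeX' : size (rem t X) <= n by rewrite size_rem // -subn1 leq_subLR add1n.
  have avoidX' : avoids tried (rem t X).
    by apply/allP=> u /mem_rem; apply: (allP avoidX).
  case/hasP: (sub_sound _ _ _ sub_t sizeX' avoidX') => B.
  rewrite mem_filter => /andP[tNB BBs] avoidB.
  by apply/hasP; exists B; rewrite // /avoids (perm_all _ permX) /= tNB.
(* t is not in X: pass to the next branch, now with t tried *)
apply: IHts branch_ts sizeX _ _.
  apply/allP=> u uX; rewrite inE negb_or (allP avoidX u uX) andbT.
  by apply: contraNneq tNX => <-.
case/hasP: hitX => u uX; rewrite inE => /predU1P[ut | uts].
  by rewrite -ut uX in tNX.
by apply/hasP; exists u.
Qed.

Lemma search_sound n : sound_upto n (search n).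
Proof.
elim: n => [|n IHn] [|B Bs] tried X //; first by case: X.
move=> search_n sizeX avoidX.
have [avoidB | ] := boolP (avoids B X); first by apply/hasP; exists B; rewrite ?mem_head.
case/allPn=> t tX /negPn tB; apply: (branch_sound IHn search_n sizeX avoidX).
by apply/hasP; exists t; rewrite //= mem_filter tB (allP avoidX t tX).
Qed.

End HittingSearch.

(* Restricted-growth words of length n whose letters never exceed one plus
   the running maximum m; [0 :: rgs 6 0] lists one colouring per partition
   of 7 points. *)
Fixpoint rgs (n m : nat) : seq (seq nat) :=
  if n is n'.+1 then [seq c :: w | c <- iota 0 m.+2, w <- rgs n' (maxn m c)]
  else [:: [::]].

Definition partitions7 : seq (seq nat) := [seq 0 :: w | w <- rgs 6 0].

Definition words3 : seq (seq nat) :=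
  [seq a :: bc | a <- iota 0 7, bc <- [seq [:: b; c] | b <- iota 0 7, c <- iota 0 7]].

Definition triples : seq (seq nat) := [seq t <- words3 | sorted ltn t].

Definition splits (p t : seq nat) : bool := size (undup [seq nth 0 p a | a <- t]) == 2.

Definition obstacles (p : seq nat) : seq nat :=
  [seq i <- iota 0 (size triples) | ~~ splits p (nth [::] triples i)].

(* All obstacle lists, best colourings first so that the search branches
   little near the root. *)
Definition candidates : seq (seq nat) :=
  sort (fun B1 B2 => size B1 <= size B2) [seq obstacles p | p <- partitions7].

Lemma mem_obstacles p i :
  (i \in obstacles p) = (i < size triples) && ~~ splits p (nth [::] triples i).
Proof. by rewrite mem_filter mem_iota add0n andbC. Qed.

Lemma search9 : search 9 candidates [::]. Proof. by vm_compute. Qed.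

Lemma sort_triple_mem (l : seq nat) :
  size l = 3 -> uniq l -> all (fun x => x < 7) l -> sort leq l \in triples.
Proof.
move=> size_l uniq_l lt7_l.
have size_s : size (sort leq l) = 3 by rewrite size_sort.
have : all (fun x => x < 7) (sort leq l) by rewrite (perm_all _ (permEl (perm_sort _ _))).
rewrite mem_filter ltn_sorted_uniq_leq sort_uniq uniq_l sort_sorted; last exact: leq_total.
case: (sort leq l) size_s => [|a [|b [|c []]]] //= _ /and4P[a7 b7 c7 _].
by apply: allpairs_f; rewrite ?mem_iota //; apply: allpairs_f; rewrite mem_iota.
Qed.

Section Relabelling.

Variables (T : finType) (V : {set T}).
Hypothesis card_V : #|V| = 7.

Definition label (x : T) : nat := index x (enum V).

Definition edge_key (e : {set T}) : seq nat := sort leq [seq label x | x <- enum e].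

Lemma edge_key_triple (e : {set T}) : e \subset V -> #|e| = 3 -> edge_key e \in triples.
Proof.
move=> eV card_e; apply: sort_triple_mem.
- by rewrite size_map -cardE.
- rewrite map_inj_in_uniq ?enum_uniq // => x y; rewrite !mem_enum => xe ye.
  by apply: (index_inj x); rewrite mem_enum; apply: (subsetP eV).
- apply/allP=> i /mapP[x]; rewrite mem_enum => xe ->.
  by rewrite /label -card_V cardE index_mem mem_enum (subsetP eV).
Qed.

Lemma ncolors_label (p : seq nat) (e : {set T}) :
  ncolors (fun x => nth 0 p (label x)) e = size (undup [seq nth 0 p i | i <- edge_key e]).
Proof.
apply/perm_size/perm_undup/perm_mem.
by rewrite perm_sym (map_comp (nth 0 p) label) perm_map // perm_sort.
Qed.

Lemma edge_key_proper (p : seq nat) (e : {set T}) :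
  e \subset V -> #|e| = 3 -> index (edge_key e) triples \notin obstacles p ->
  1 < ncolors (fun x => nth 0 p (label x)) e < #|e|.
Proof.
move=> eV card_e; have key_e := edge_key_triple eV card_e.
rewrite mem_obstacles index_mem key_e nth_index //= negbK.
by rewrite ncolors_label card_e => /eqP->.
Qed.

End Relabelling.

Theorem colorable_small (T : finType) (V : {set T}) (E : {set {set T}}) :
  bihypergraph V E -> uniform 3 E -> #|V| = 7 -> #|E| <= 9 -> colorable E.
Proof.
move=> [edges_in_V _] uniform_E card_V card_E.
pose X := [seq index (edge_key V e) triples | e <- enum E].
have size_X : size X <= 9 by rewrite size_map -cardE.
have [B B_cand avoid_X] : exists2 B, B \in candidates & avoids B X.
  by apply/hasP; apply: (search_sound search9 size_X); apply/allP.
move: B_cand avoid_X; rewrite mem_sort => /mapP[p _ ->] avoid_X.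
exists (fun x => nth 0 p (label V x)) => e eE.
apply: (edge_key_proper card_V (edges_in_V e eE) (uniform_E e eE)).
by apply: (allP avoid_X); apply: map_f; rewrite mem_enum.
Qed.

Theorem mainTheorem12 :
  (forall (T : finType) (V : {set T}) (E : {set {set T}}),
      bihypergraph V E -> uniform 3 E -> #|V| = 7 -> #|E| <= 9 -> colorable E) /\
  (* consequently l(7,3) >= 10: every minimal uncolorable 3-uniform
     bi-hypergraph with exactly 7 vertices has at least 10 edges *)
  (forall (T : finType) (V : {set T}) (E : {set {set T}}),
      minimal_uncolorable V E -> uniform 3 E -> #|V| = 7 -> 10 <= #|E|).
Proof.
split=> [|T V E [bihyp_E [uncolorable_E _]] uniform_E card_V]; first exact: colorable_small.
rewrite leqNgt; apply/negP => card_E.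
exact: uncolorable_E (colorable_small bihyp_E uniform_E card_V card_E).
Qed.
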